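(* For all integers $m\ge 1$ and $v\ge 1$, the Gardner–Fisher sum satisfies $$S_{m,v}=\frac{1}{(2v-1)!}\sum_{n=0}^{v-1}\left(\frac{\pi}{m}\right)^{2n}s(v,n)\,\Gamma(2v-2n)\,\zeta(2v-2n)\left(1-\frac{1}{m^{2v-2n}}\right).$$
   Context: The Gardner–Fisher sum is $S_{m,v}=\left(\frac{\pi}{2m}\right)^{2v}\sum_{k=1}^{m-1}\cos^{-2v}\!\left(\frac{k\pi}{2m}\right)=\left(\frac{\pi}{2m}\right)^{2v}\sum_{k=1}^{m-1}\sin^{-2v}\!\left(\frac{k\pi}{2m}\right)$ (empty sum $=0$). For integers $v\ge1$ and $0\le n\le v-1$, $s(v,n)$ denotes the $n$-th elementary symmetric polynomial evaluated at the $v-1$ numbers $1^2,2^2,\dots,(v-1)^2$, i.e. $s(v,n)=\sum_{1\le i_1<\dots<i_n\le v-1} i_1^2i_2^2\cdots i_n^2$, with $s(v,0)=1$. $\zeta$ is the Riemann zeta function. *)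

From Stdlib Require Import Reals List Arith ClassicalEpsilon.
Import ListNotations.
Open Scope R_scope.

Fixpoint sumR (l : list nat) (f : nat -> R) : R :=
  match l with
  | [] => 0
  | x :: l' => f x + sumR l' f
  end.

Fixpoint esym (l : list R) (n : nat) : R :=
  match l, n with
  | _, O => 1
  | [], S _ => 0
  | x :: l', S n' => esym l' (S n') + x * esym l' n'
  end.

Definition s_coef (v n : nat) : R :=
  esym (map (fun i => INR i ^ 2) (seq 1 (v - 1))) n.

(* Riemann zeta at a natural argument s (meaningful for s >= 2):
   the sum of the series sum_{n>=1} 1/n^s. *)
Definition zeta (s : nat) : R :=
  epsilon (inhabits 0) (fun l => infinite_sum (fun n => / (INR (n + 1)) ^ s) l).

Definition Gamma_nat (k : nat) : R := INR (fact (k - 1)).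

Definition GF_sum (m v : nat) : R :=
  (PI / (2 * INR m)) ^ (2 * v) *
  sumR (seq 1 (m - 1))
       (fun k => / (cos (INR k * PI / (2 * INR m))) ^ (2 * v)).

(* Put x_k = k pi / (2m); after k |-> m - k the sum becomes (pi/(2m))^(2v) times
   the sum of csc(x_k)^(2v).  The partial fraction series D_p(x) = sum over n in Z
   of (x + n pi)^(-p) satisfies D_2 = csc^2 (csc^2 - D_2 is bounded on (0, pi) and
   is invariant under h(x) |-> (h(x/2) + h((x+pi)/2))/4, hence vanishes), and
   termwise differentiation gives F_p' = -F_(p+1) for F_p = Gamma(p) D_p.  Since
   T_v = (2v-1)! csc^(2v) satisfies T_(v+1) = T_v'' + 4 v^2 T_v, induction on v and
   the recurrence s(v+1, n+1) = s(v, n+1) + v^2 s(v, n) give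
   T_v = sum_n 4^n s(v, n) F_(2v-2n).  Finally (pi/(2m))^p D_p(x_k), summed over
   k = 1 .. m-1, is the sum of n^(-p) over the positive integers n not divisible
   by m, that is (1 - m^(-p)) zeta(p). *)

From Stdlib Require Import Reals List Arith Lia Lra ClassicalEpsilon.
From Coquelicot Require Import Coquelicot.
Import ListNotations.
Open Scope R_scope.

Lemma sumR_app l1 l2 f : sumR (l1 ++ l2) f = sumR l1 f + sumR l2 f.
Proof. induction l1; simpl; [ring | rewrite IHl1; ring]. Qed.

Lemma sumR_map l g f : sumR (map g l) f = sumR l (fun n => f (g n)).
Proof. induction l; simpl; [ring | rewrite IHl; ring]. Qed.

Lemma sumR_ext_in l f g : (forall n, In n l -> f n = g n) -> sumR l f = sumR l g.
Proof.
  induction l; intros H; simpl; auto.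
  rewrite H by (left; reflexivity).
  rewrite IHl by (intros; apply H; right; assumption). reflexivity.
Qed.

Lemma sumR_plus l f g : sumR l (fun n => f n + g n) = sumR l f + sumR l g.
Proof. induction l; simpl; [ring | rewrite IHl; ring]. Qed.

Lemma sumR_scal l c f : sumR l (fun n => c * f n) = c * sumR l f.
Proof. induction l; simpl; [ring | rewrite IHl; ring]. Qed.

Lemma sumR_swap l1 l2 (f : nat -> nat -> R) :
  sumR l1 (fun a => sumR l2 (fun b => f a b)) = sumR l2 (fun b => sumR l1 (fun a => f a b)).
Proof.
  induction l1; simpl.
  - induction l2; simpl; [reflexivity | rewrite <- IHl2; ring].
  - rewrite IHl1, <- sumR_plus. reflexivity.
Qed.

Lemma sumR_seq_last a k f : sumR (seq a (S k)) f = sumR (seq a k) f + f (a + k)%nat.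
Proof. rewrite seq_S, sumR_app. simpl. ring. Qed.

Lemma sumR_seq_add b a N f : sumR (seq (b + a) N) f = sumR (seq a N) (fun k => f (b + k)%nat).
Proof.
  revert a. induction N; intros a; simpl; [reflexivity |].
  rewrite <- IHN, Nat.add_succ_r. reflexivity.
Qed.

Lemma sumR_seq0_first k f : sumR (seq 0 (S k)) f = f O + sumR (seq 0 k) (fun n => f (S n)).
Proof. exact (f_equal (Rplus (f O)) (sumR_seq_add 1 0 k f)). Qed.

Lemma sumR_rev l f : sumR (rev l) f = sumR l f.
Proof. induction l; simpl; auto. rewrite sumR_app, IHl. simpl. ring. Qed.

Lemma rev_seq1 N : rev (seq 1 N) = map (fun k => S N - k)%nat (seq 1 N).
Proof.
  induction N; [reflexivity |].
  rewrite (seq_S N 1) at 1. rewrite rev_app_distr, IHN.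
  change (seq 1 (S N)) with (1%nat :: seq 2 N).
  rewrite <- (seq_shift N 1). cbn [map]. rewrite map_map. reflexivity.
Qed.

Lemma sumR_seq1_reflect N f : sumR (seq 1 N) f = sumR (seq 1 N) (fun k => f (S N - k)%nat).
Proof. rewrite <- sumR_rev, rev_seq1, sumR_map. reflexivity. Qed.

Lemma sum_f_R0_sumR f N : sum_f_R0 f N = sumR (seq 0 (S N)) f.
Proof. induction N; [simpl; ring | rewrite tech5, sumR_seq_last, IHN; reflexivity]. Qed.

Lemma esym_0 l : esym l 0 = 1.
Proof. destruct l; reflexivity. Qed.

Lemma esym_gt_length l n : (length l < n)%nat -> esym l n = 0.
Proof.
  revert n. induction l; intros n H; destruct n; simpl in *; try lia; auto.
  rewrite !IHl by lia. ring.
Qed.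

Lemma esym_snoc l x n : esym (l ++ [x]) (S n) = esym l (S n) + x * esym l n.
Proof.
  revert n. induction l as [|y l IH]; intros n; simpl.
  - destruct n; reflexivity.
  - rewrite IH. destruct n; [rewrite !esym_0 | rewrite IH]; ring.
Qed.

Lemma s_coef_0 v : s_coef v 0 = 1.
Proof. apply esym_0. Qed.

Lemma s_coef_diag v : (1 <= v)%nat -> s_coef v v = 0.
Proof. intros Hv. apply esym_gt_length. rewrite length_map, length_seq. lia. Qed.

Lemma s_coef_S v n : (1 <= v)%nat ->
  s_coef (S v) (S n) = s_coef v (S n) + INR v ^ 2 * s_coef v n.
Proof.
  intros Hv. unfold s_coef. replace (S v - 1)%nat with (S (v - 1)) by lia.
  rewrite seq_S, map_app. replace (1 + (v - 1))%nat with v by lia.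
  apply esym_snoc.
Qed.

Lemma s_coef_sum_step v (d : nat -> R) : (1 <= v)%nat ->
  sumR (seq 0 (S v)) (fun n => 4 ^ n * s_coef (S v) n * d (2 * S v - 2 * n)%nat)
  = sumR (seq 0 v) (fun n => 4 ^ n * s_coef v n * d (2 * S v - 2 * n)%nat)
    + 4 * INR v ^ 2 * sumR (seq 0 v) (fun n => 4 ^ n * s_coef v n * d (2 * v - 2 * n)%nat).
Proof.
  intros Hv.
  rewrite sumR_seq0_first, <- sumR_scal.
  rewrite (sumR_ext_in _ _ (fun n => 4 ^ S n * s_coef v (S n) * d (2 * S v - 2 * S n)%nat
                                     + 4 * INR v ^ 2 * (4 ^ n * s_coef v n * d (2 * v - 2 * n)%nat))).
  2:{ intros n _. rewrite s_coef_S by exact Hv.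
      replace (2 * S v - 2 * S n)%nat with (2 * v - 2 * n)%nat by lia. simpl. ring. }
  rewrite sumR_plus.
  destruct v as [|w]; [lia |].
  rewrite (sumR_seq0_first w (fun n => 4 ^ n * s_coef (S w) n * d (2 * S (S w) - 2 * n)%nat)).
  rewrite (sumR_seq_last 0 w (fun n => 4 ^ S n * s_coef (S w) (S n) * d (2 * S (S w) - 2 * S n)%nat)).
  cbv beta. rewrite Nat.add_0_l, s_coef_diag, !s_coef_0 by lia. ring.
Qed.

Lemma is_series_telescoping_inv :
  is_series (fun n => / INR (S n) - / INR (S (S n))) 1.
Proof.
  apply is_series_Reals, is_lim_seq_Reals.
  apply is_lim_seq_ext with (fun n => 1 - / INR (n + 2)).
  { induction n as [|n IH]; [simpl; field |].
    rewrite tech5, <- IH, !(Nat.add_comm _ 2). simpl. ring. }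
  replace (Finite 1) with (Finite (1 - 0)) by (f_equal; ring).
  apply is_lim_seq_minus'; [apply is_lim_seq_const |].
  apply (is_lim_seq_incr_n (fun n => / INR n) 2 0).
  apply (is_lim_seq_inv _ p_infty); [apply is_lim_seq_INR | discriminate].
Qed.

Lemma ex_series_Rabs_le (a b : nat -> R) :
  (forall n, Rabs (a n) <= b n) -> ex_series b -> ex_series a.
Proof. exact (@ex_series_le R_AbsRing R_CompleteNormedModule a b). Qed.

Lemma ex_series_inv_pow p : (2 <= p)%nat -> ex_series (fun n => / INR (S n) ^ p).
Proof.
  intros Hp.
  apply (ex_series_Rabs_le _ (fun n => 2 * (/ INR (S n) - / INR (S (S n))))).
  - intros n. rewrite S_INR with (n := S n).
    assert (Hx : 1 <= INR (S n)) by (rewrite S_INR; pose proof (pos_INR n); lra).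
    rewrite Rabs_right by (apply Rle_ge, Rlt_le, Rinv_0_lt_compat, pow_lt; lra).
    apply Rle_trans with (/ INR (S n) ^ 2).
    + apply Rinv_le_contravar; [apply pow_lt; lra | apply Rle_pow; assumption].
    + replace (2 * (/ INR (S n) - / (INR (S n) + 1))) with (/ (INR (S n) * (INR (S n) + 1) / 2))
        by (field; lra).
      apply Rinv_le_contravar; [apply Rdiv_lt_0_compat; nra |].
      set (x := INR (S n)) in *. simpl. unfold Rdiv. nra.
  - exists (2 * 1). apply (@is_series_scal_l R_AbsRing R_NormedModule 2 _ 1).
    exact is_series_telescoping_inv.
Qed.

Lemma Series_Rabs_le (a M : nat -> R) :
  (forall n, Rabs (a n) <= M n) -> ex_series M -> Rabs (Series a) <= Series M.
Proof.
  intros H HM.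
  assert (HA : ex_series (fun n => Rabs (a n))).
  { apply (ex_series_Rabs_le _ M); [intros n; rewrite Rabs_Rabsolu |]; auto. }
  apply Rle_trans with (Series (fun n => Rabs (a n))); [apply Series_Rabs; exact HA |].
  apply Series_le; [intros n; split; [apply Rabs_pos | apply H] | exact HM].
Qed.

Lemma CVU_Series_dominated (fn : nat -> R -> R) (M : nat -> R) c (r : posreal) :
  (forall n y, Boule c r y -> Rabs (fn n y) <= M n) -> ex_series M ->
  CVU (fun N y => sum_f_R0 (fun k => fn k y) N) (fun y => Series (fun k => fn k y)) c r.
Proof.
  intros HM HS eps Heps.
  destruct (proj1 (is_series_Reals _ _) (Series_correct _ HS) eps Heps) as [N HN].
  exists N. intros n y Hn Hy.
  specialize (HN n Hn). unfold R_dist in HN.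
  assert (Ey : ex_series (fun k => fn k y)) by (apply (ex_series_Rabs_le _ M); auto).
  rewrite (Series_incr_n _ (S n)) by (auto; lia).
  rewrite (Series_incr_n M (S n)) in HN by (auto; lia). simpl pred in HN |- *.
  replace (sum_f_R0 (fun k => fn k y) n + Series (fun k => fn (S n + k)%nat y)
           - sum_f_R0 (fun k => fn k y) n) with (Series (fun k => fn (S n + k)%nat y)) by ring.
  eapply Rle_lt_trans.
  - apply (Series_Rabs_le _ (fun k => M (S n + k)%nat)); [intros k; apply HM; exact Hy |].
    apply (ex_series_incr_n M (S n)); exact HS.
  - eapply Rle_lt_trans; [| exact HN]. rewrite Rabs_minus_sym.
    replace (sum_f_R0 M n + Series (fun k => M (S n + k)%nat) - sum_f_R0 M n)
      with (Series (fun k => M (S n + k)%nat)) by ring.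
    apply Rle_abs.
Qed.

Lemma derivable_pt_lim_sum_f_R0 (fn fn' : nat -> R -> R) x N :
  (forall n, derivable_pt_lim (fn n) x (fn' n x)) ->
  derivable_pt_lim (fun y => sum_f_R0 (fun k => fn k y) N) x (sum_f_R0 (fun k => fn' k x) N).
Proof.
  intros H. induction N; simpl; [apply H |].
  apply (derivable_pt_lim_plus (fun y => sum_f_R0 (fun k => fn k y) N) (fn (S N))); auto.
Qed.

Lemma derivable_pt_lim_Series (fn fn' : nat -> R -> R) (M : nat -> R) c (r : posreal) x :
  (forall n y, Boule c r y -> derivable_pt_lim (fn n) y (fn' n y)) ->
  (forall n y, Boule c r y -> Rabs (fn' n y) <= M n) -> ex_series M ->
  (forall y, Boule c r y -> ex_series (fun k => fn k y)) ->
  Boule c r x ->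
  derivable_pt_lim (fun y => Series (fun k => fn k y)) x (Series (fun k => fn' k x)).
Proof.
  intros Hd HM HS Hc.
  apply (CVU_derivable (fun N y => sum_f_R0 (fun k => fn k y) N)
                       (fun N y => sum_f_R0 (fun k => fn' k y) N) _
                       (fun y => Series (fun k => fn' k y)) c r).
  - apply CVU_Series_dominated with M; assumption.
  - intros y Hy. apply is_series_Reals, Series_correct, Hc, Hy.
  - intros n y Hy. apply derivable_pt_lim_sum_f_R0. intros k; apply Hd, Hy.
Qed.

Lemma sum_f_R0_blocks (a : nat -> R) k J :
  sum_f_R0 (fun j => sum_f_R0 (fun r => a (S k * j + r)%nat) k) J = sum_f_R0 a (k + S k * J).
Proof.
  induction J.
  - replace (k + S k * 0)%nat with k by lia. simpl. apply sum_eq. intros i _. f_equal. lia.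
  - rewrite tech5, IHJ, (tech2 a (k + S k * J) (k + S k * S J)) by lia.
    f_equal. replace (k + S k * S J - S (k + S k * J))%nat with k by lia.
    apply sum_eq. intros i _. f_equal. lia.
Qed.

Lemma is_series_blocks (a : nat -> R) k l : is_series a l ->
  is_series (fun j => sum_f_R0 (fun r => a (S k * j + r)%nat) k) l.
Proof.
  intros H. apply is_series_Reals, is_lim_seq_Reals in H. apply is_series_Reals, is_lim_seq_Reals.
  apply is_lim_seq_ext with (fun J => sum_f_R0 a (k + S k * J)).
  { intros J. symmetry. apply sum_f_R0_blocks. }
  apply (is_lim_seq_subseq (sum_f_R0 a) l (fun J => k + S k * J)%nat); [| exact H].
  apply eventually_subseq. intros n. lia.
Qed.

(** * The partial fraction series *)

Lemma PI_gt_3 : 3 < PI.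
Proof. pose proof PI2_3_2. lra. Qed.

Lemma Rabs_inv_pow_le a y p : 0 < a -> a <= Rabs y -> Rabs (/ y ^ p) <= / a ^ p.
Proof.
  intros Ha Hy. rewrite Rabs_inv, <- RPow_abs.
  apply Rinv_le_contravar; [apply pow_lt; exact Ha | apply pow_incr; lra].
Qed.

(* [pf_sum p x] is D_p(x), the sum over all integers n of (x + n pi)^(-p), the terms for n
   and -n-1 being grouped. *)
Definition pf_term (p : nat) (x : R) (n : nat) : R :=
  / (x + INR n * PI) ^ p + / (x - INR (S n) * PI) ^ p.

Definition pf_sum (p : nat) (x : R) : R := Series (pf_term p x).

Lemma pf_term_bound p x e n : 0 < e -> e <= x <= PI - e ->
  Rabs (pf_term p x n) <= 2 * / e ^ p * / INR (S n) ^ p.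
Proof.
  intros He Hx. pose proof PI_gt_3. pose proof (pos_INR n).
  assert (HS : INR (S n) = INR n + 1) by apply S_INR.
  replace (2 * / e ^ p * / INR (S n) ^ p) with (/ (e * INR (S n)) ^ p + / (e * INR (S n)) ^ p)
    by (rewrite Rpow_mult_distr, Rinv_mult; ring).
  assert (0 < e * INR (S n)) by (rewrite HS; nra).
  unfold pf_term. eapply Rle_trans; [apply Rabs_triang |].
  apply Rplus_le_compat; apply Rabs_inv_pow_le; auto.
  - rewrite Rabs_right; rewrite ?HS; nra.
  - rewrite Rabs_left1; rewrite ?HS; nra.
Qed.

Lemma ex_series_pf_term_uniform p x e : (2 <= p)%nat -> 0 < e -> e <= x <= PI - e ->
  ex_series (pf_term p x).
Proof.
  intros Hp He Hx.
  apply (ex_series_Rabs_le _ (fun n => 2 * / e ^ p * / INR (S n) ^ p)).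
  - intros n; apply pf_term_bound; assumption.
  - apply (@ex_series_scal_l R_AbsRing R_NormedModule (2 * / e ^ p) (fun n => / INR (S n) ^ p)).
    apply ex_series_inv_pow; exact Hp.
Qed.

Lemma ex_series_pf_term p x : (2 <= p)%nat -> 0 < x < PI -> ex_series (pf_term p x).
Proof.
  intros Hp Hx. apply ex_series_pf_term_uniform with (Rmin x (PI - x)); [exact Hp | |].
  - apply Rmin_pos; lra.
  - pose proof (Rmin_l x (PI - x)). pose proof (Rmin_r x (PI - x)). lra.
Qed.

Lemma is_derive_inv_pow q c y : y + c <> 0 ->
  is_derive (fun y => / (y + c) ^ S q) y (- INR (S q) * / (y + c) ^ S (S q)).
Proof.
  intros H. assert ((y + c) ^ q <> 0) by (apply pow_nonzero; exact H).
  auto_derive.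
  - apply Rmult_integral_contrapositive; split; assumption.
  - replace (match q with 0%nat => 1 | S _ => INR q + 1 end) with (INR (S q)) by reflexivity.
    cbn [pow]. field. split; assumption.
Qed.

Lemma is_derive_pf_term p x n : (1 <= p)%nat -> 0 < x < PI ->
  is_derive (fun y => pf_term p y n) x (- INR p * pf_term (S p) x n).
Proof.
  intros Hp Hx. destruct p as [|q]; [lia |].
  pose proof PI_gt_3. pose proof (pos_INR n). unfold pf_term. rewrite S_INR.
  replace (- INR (S q) * (/ (x + INR n * PI) ^ S (S q) + / (x - (INR n + 1) * PI) ^ S (S q)))
    with (- INR (S q) * / (x + INR n * PI) ^ S (S q)
          + - INR (S q) * / (x + - ((INR n + 1) * PI)) ^ S (S q)) by (unfold Rminus; ring).
  apply (is_derive_plus (fun y => / (y + INR n * PI) ^ S q)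
                        (fun y => / (y + - ((INR n + 1) * PI)) ^ S q));
    apply is_derive_inv_pow; nra.
Qed.

Lemma is_derive_pf_sum p x : (2 <= p)%nat -> 0 < x < PI ->
  is_derive (pf_sum p) x (- INR p * pf_sum (S p) x).
Proof.
  intros Hp Hx.
  set (e := Rmin x (PI - x) / 2).
  assert (He : 0 < e) by (apply Rdiv_lt_0_compat; [apply Rmin_pos |]; lra).
  assert (HB : forall y, Boule x (mkposreal e He) y -> e <= y <= PI - e /\ 0 < y < PI).
  { intros y Hy. unfold Boule in Hy; simpl in Hy. apply Rabs_def2 in Hy.
    pose proof (Rmin_l x (PI - x)). pose proof (Rmin_r x (PI - x)). unfold e in *. lra. }
  apply is_derive_Reals. unfold pf_sum. rewrite <- Series_scal_l.
  apply (derivable_pt_lim_Series (fun n y => pf_term p y n) (fun n y => - INR p * pf_term (S p) y n)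
          (fun n => INR p * (2 * / e ^ S p * / INR (S n) ^ S p)) x (mkposreal e He)).
  - intros n y Hy. apply is_derive_Reals, is_derive_pf_term; [lia | apply HB, Hy].
  - intros n y Hy. rewrite Rabs_mult, Rabs_Ropp, Rabs_right by (apply Rle_ge, pos_INR).
    apply Rmult_le_compat_l; [apply pos_INR | apply pf_term_bound; [exact He | apply HB, Hy]].
  - apply (@ex_series_scal_l R_AbsRing R_NormedModule (INR p)).
    apply (@ex_series_scal_l R_AbsRing R_NormedModule (2 * / e ^ S p) (fun n => / INR (S n) ^ S p)).
    apply ex_series_inv_pow; lia.
  - intros y Hy. apply ex_series_pf_term; [exact Hp | apply HB, Hy].
  - unfold Boule. rewrite Rminus_diag, Rabs_R0. exact He.
Qed.

Definition pf_gamma_sum (p : nat) (x : R) : R := Gamma_nat p * pf_sum p x.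

Lemma Gamma_nat_S p : (1 <= p)%nat -> Gamma_nat (S p) = INR p * Gamma_nat p.
Proof.
  intros Hp. unfold Gamma_nat. destruct p as [|q]; [lia |].
  rewrite <- mult_INR. f_equal. simpl. rewrite Nat.sub_0_r. reflexivity.
Qed.

Lemma is_derive_pf_gamma_sum p x : (2 <= p)%nat -> 0 < x < PI ->
  is_derive (pf_gamma_sum p) x (- pf_gamma_sum (S p) x).
Proof.
  intros Hp Hx. unfold pf_gamma_sum. rewrite Gamma_nat_S by lia.
  replace (- (INR p * Gamma_nat p * pf_sum (S p) x))
    with (Gamma_nat p * (- INR p * pf_sum (S p) x)) by ring.
  apply is_derive_scal, is_derive_pf_sum; assumption.
Qed.

(** * The series for csc^2 *)

Lemma pf_sum_2_duplication x : 0 < x < PI ->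
  pf_sum 2 (x / 2) + pf_sum 2 ((x + PI) / 2) = 4 * pf_sum 2 x.
Proof.
  intros Hx. pose proof PI_gt_3.
  unfold pf_sum. rewrite <- Series_plus by (apply ex_series_pf_term; [lia | lra]).
  apply is_series_unique.
  apply (is_series_ext (fun j => 4 * sum_f_R0 (fun r => pf_term 2 x (S 1 * j + r)%nat) 1)).
  - intros n. simpl. unfold pf_term.
    rewrite !S_INR, !plus_INR. change (INR 0) with 0. pose proof (pos_INR n).
    change (INR 1) with 1. field; repeat split; nra.
  - apply (@is_series_scal_l R_AbsRing R_NormedModule 4).
    apply is_series_blocks, Series_correct, ex_series_pf_term; [lia | exact Hx].
Qed.

Lemma inv_sin_sq_duplication x : 0 < x < PI ->
  / sin x ^ 2 = (/ sin (x / 2) ^ 2 + / sin ((x + PI) / 2) ^ 2) / 4.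
Proof.
  intros Hx.
  replace ((x + PI) / 2) with (x / 2 + PI / 2) by field.
  rewrite sin_plus, sin_PI2, cos_PI2.
  replace x with (2 * (x / 2)) at 1 by field. rewrite sin_2a.
  assert (0 < sin (x / 2)) by (apply sin_gt_0; lra).
  assert (0 < cos (x / 2)) by (apply cos_gt_0; lra).
  assert (E : sin (x / 2) ^ 2 + cos (x / 2) ^ 2 = 1) by (rewrite <- (sin2_cos2 (x / 2)); unfold Rsqr; ring).
  field_simplify; try lra.
  rewrite <- E at 1. field. lra.
Qed.

Lemma Rabs_le_geom_eq0 a B : (forall n, Rabs a <= B * (/ 2) ^ n) -> a = 0.
Proof.
  intros H.
  assert (Hle : Rbar_le (Rabs a) (B * 0)).
  { apply (is_lim_seq_le (fun _ => Rabs a) (fun n => B * (/ 2) ^ n)); [exact H | apply is_lim_seq_const |].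
    apply (is_lim_seq_scal_l _ B 0), is_lim_seq_geom. rewrite Rabs_right; lra. }
  simpl in Hle. rewrite Rmult_0_r in Hle. apply Rabs_eq_0. pose proof (Rabs_pos a). lra.
Qed.

Lemma duplication_bounded_eq0 (h : R -> R) B :
  (forall x, 0 < x < PI -> Rabs (h x) <= B) ->
  (forall x, 0 < x < PI -> h x = (h (x / 2) + h ((x + PI) / 2)) / 4) ->
  forall x, 0 < x < PI -> h x = 0.
Proof.
  intros HB Hdup x Hx. pose proof PI_gt_3.
  apply (Rabs_le_geom_eq0 _ B). intros n. revert x Hx.
  induction n as [|n IH]; intros x Hx; [rewrite pow_O, Rmult_1_r; apply HB, Hx |].
  rewrite Hdup by exact Hx.
  pose proof (IH (x / 2) ltac:(lra)). pose proof (IH ((x + PI) / 2) ltac:(lra)).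
  unfold Rdiv. rewrite Rabs_mult, (Rabs_right (/ 4)) by lra.
  pose proof (Rabs_triang (h (x * / 2)) (h ((x + PI) * / 2))). simpl pow.
  unfold Rdiv in *. nra.
Qed.

Lemma inv_sin_sq_sub_inv_sq_bound x : 0 < x <= PI / 2 -> 0 <= / sin x ^ 2 - / x ^ 2 <= 3.
Proof.
  intros Hx. pose proof PI_4.
  assert (Hs : x - x ^ 3 / 6 <= sin x).
  { destruct (sin_bound x 0 ltac:(lra) ltac:(lra)) as [H1 _].
    unfold sin_approx, sin_term in H1. simpl in H1. lra. }
  assert (Hs2 : sin x < x) by (apply sin_lt_x; lra).
  set (t := x ^ 2 / 6).
  assert (Ht : 0 < t <= 2 / 3) by (unfold t; nra).
  assert (HL : 0 < x * (1 - t)) by nra.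
  split.
  - assert (/ x ^ 2 <= / sin x ^ 2)
      by (apply Rinv_le_contravar; [apply pow2_gt_0; nra | apply pow_incr; nra]).
    lra.
  - assert (/ sin x ^ 2 <= / (x * (1 - t)) ^ 2)
      by (apply Rinv_le_contravar; [apply pow2_gt_0; lra | apply pow_incr; unfold t in *; nra]).
    assert (E : / (x * (1 - t)) ^ 2 - / x ^ 2 = (2 - t) / (6 * (1 - t) ^ 2))
      by (unfold t; field; split; [intro; nra | lra]).
    assert ((2 - t) / (6 * (1 - t) ^ 2) <= 3) by (apply Rle_div_l; nra).
    lra.
Qed.

Lemma inv_sq_le_1 y : 1 <= Rabs y -> 0 <= / y ^ 2 <= 1.
Proof.
  intros H. assert (Hy : 1 <= y ^ 2) by (rewrite <- pow2_abs; nra).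
  split; [apply Rlt_le, Rinv_0_lt_compat; lra |].
  rewrite <- Rinv_1. apply Rinv_le_contravar; lra.
Qed.

Lemma pf_term_2_tail_bound x n : 0 < x < PI ->
  Rabs (pf_term 2 x (S n)) <= 2 * / INR (S n) ^ 2.
Proof.
  intros Hx. pose proof PI_gt_3. pose proof (pos_INR n).
  assert (HS : INR (S n) = INR n + 1) by apply S_INR.
  assert (HSS : INR (S (S n)) = INR n + 2) by (rewrite !S_INR; ring).
  unfold pf_term. eapply Rle_trans; [apply Rabs_triang |].
  replace (2 * / INR (S n) ^ 2) with (/ INR (S n) ^ 2 + / INR (S n) ^ 2) by ring.
  apply Rplus_le_compat; apply Rabs_inv_pow_le; rewrite ?HS, ?HSS; try lra.
  - rewrite Rabs_right; nra.
  - rewrite Rabs_left1; nra.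
Qed.

Lemma inv_sin_sq_sub_pf_sum_bound x : 0 < x < PI ->
  Rabs (/ sin x ^ 2 - pf_sum 2 x) <= 3 + Series (fun n => 2 * / INR (S n) ^ 2).
Proof.
  intros Hx. pose proof PI_gt_3.
  unfold pf_sum. rewrite Series_incr_1 by (apply ex_series_pf_term; [lia | exact Hx]).
  assert (Htail : Rabs (Series (fun n => pf_term 2 x (S n)))
                  <= Series (fun n => 2 * / INR (S n) ^ 2)).
  { apply Series_Rabs_le; [intros n; apply pf_term_2_tail_bound, Hx |].
    apply (@ex_series_scal_l R_AbsRing R_NormedModule 2 (fun n => / INR (S n) ^ 2)).
    apply ex_series_inv_pow; lia. }
  assert (Hhead : -1 <= / sin x ^ 2 - pf_term 2 x 0 <= 3).
  { unfold pf_term. rewrite Rmult_0_l, Rplus_0_r, Rmult_1_l.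
    destruct (Rle_or_lt x (PI / 2)).
    - pose proof (inv_sin_sq_sub_inv_sq_bound x ltac:(lra)).
      pose proof (inv_sq_le_1 (x - PI) ltac:(rewrite Rabs_left1; lra)). lra.
    - pose proof (inv_sin_sq_sub_inv_sq_bound (PI - x) ltac:(lra)).
      rewrite sin_PI_x in H1. replace ((PI - x) ^ 2) with ((x - PI) ^ 2) in H1 by ring.
      pose proof (inv_sq_le_1 x ltac:(rewrite Rabs_right; lra)). lra. }
  apply Rabs_le. pose proof (proj1 (Rabs_le_between _ _) Htail). lra.
Qed.

Lemma pf_sum_2_eq x : 0 < x < PI -> pf_sum 2 x = / sin x ^ 2.
Proof.
  intros Hx.
  assert (H0 : / sin x ^ 2 - pf_sum 2 x = 0).
  { apply (duplication_bounded_eq0 (fun y => / sin y ^ 2 - pf_sum 2 y) _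
             inv_sin_sq_sub_pf_sum_bound); [| exact Hx].
    intros y Hy. rewrite inv_sin_sq_duplication by exact Hy.
    pose proof (pf_sum_2_duplication y Hy). lra. }
  lra.
Qed.

(** * Powers of the cosecant *)

Lemma is_derive_inv_sin_pow k y : sin y <> 0 ->
  is_derive (fun y => / sin y ^ k) y (- INR k * cos y / sin y ^ S k).
Proof.
  intros H. assert (Hk : sin y ^ k <> 0) by (apply pow_nonzero; exact H).
  auto_derive; [exact Hk |].
  destruct k as [|j]; [simpl; field; exact H |].
  assert (sin y ^ j <> 0) by (apply pow_nonzero; exact H).
  simpl Init.Nat.pred. cbn [pow]. field. auto.
Qed.

Lemma is_derive_cos_div_sin_pow k y : sin y <> 0 ->
  is_derive (fun y => - INR k * cos y / sin y ^ S k) y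
    (INR k * INR (S k) / sin y ^ S (S k) - INR k ^ 2 / sin y ^ k).
Proof.
  intros H. assert (Hk : sin y ^ k <> 0) by (apply pow_nonzero; exact H).
  auto_derive; [apply Rmult_integral_contrapositive; split; assumption |].
  replace (match k with 0%nat => 1 | S _ => INR k + 1 end) with (INR (S k)) by reflexivity.
  rewrite S_INR. cbn [pow]. field_simplify; [| auto | auto].
  replace (cos y ^ 2) with (1 - sin y ^ 2) by (rewrite <- (sin2_cos2 y); unfold Rsqr; ring).
  field. auto.
Qed.

Lemma is_derive_sumR (l : list nat) (f : nat -> R -> R) (f' : nat -> R) x :
  (forall n, In n l -> is_derive (f n) x (f' n)) ->
  is_derive (fun y => sumR l (fun n => f n y)) x (sumR l f').
Proof.
  induction l as [|a l IH]; intros H; simpl.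
  - apply (is_derive_const 0 x).
  - apply (is_derive_plus (f a) (fun y => sumR l (fun n => f n y))).
    + apply H; left; reflexivity.
    + apply IH. intros n Hn; apply H; right; exact Hn.
Qed.

Lemma is_derive_ext_open a b (f g : R -> R) x l : a < x < b ->
  (forall y, a < y < b -> f y = g y) -> is_derive f x l -> is_derive g x l.
Proof.
  intros Hx Hfg. apply is_derive_ext_loc.
  apply (filter_imp (fun y => a < y < b)); [exact Hfg |].
  apply (locally_interval _ x (Finite a) (Finite b)); simpl; try tauto.
Qed.

Lemma is_derive2_unique_open a b (f g f1 g1 : R -> R) x (f2 g2 : R) : a < x < b ->
  (forall y, a < y < b -> f y = g y) ->
  (forall y, a < y < b -> is_derive f y (f1 y)) ->
  (forall y, a < y < b -> is_derive g y (g1 y)) ->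
  is_derive f1 x f2 -> is_derive g1 x g2 -> f2 = g2.
Proof.
  intros Hx Hfg Hf Hg Hf2 Hg2.
  assert (H1 : forall y, a < y < b -> f1 y = g1 y).
  { intros y Hy. rewrite <- (is_derive_unique g y (g1 y) (Hg y Hy)).
    symmetry. apply is_derive_unique, (is_derive_ext_open a b f); [exact Hy | exact Hfg | apply Hf, Hy]. }
  rewrite <- (is_derive_unique g1 x g2 Hg2).
  symmetry. apply is_derive_unique, (is_derive_ext_open a b f1); [exact Hx | exact H1 | exact Hf2].
Qed.

Lemma inv_sin_pow_expansion v x : (1 <= v)%nat -> 0 < x < PI ->
  Gamma_nat (2 * v) * / sin x ^ (2 * v)
  = sumR (seq 0 v) (fun n => 4 ^ n * s_coef v n * pf_gamma_sum (2 * v - 2 * n) x).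
Proof.
  intros Hv. revert x. induction v as [|v IH]; [lia |]; intros x Hx.
  assert (Hsin : forall y, 0 < y < PI -> sin y <> 0)
    by (intros y Hy; apply Rgt_not_eq, sin_gt_0; lra).
  destruct (Nat.eq_dec v 0) as [-> | Hv0].
  { unfold pf_gamma_sum, Gamma_nat. simpl. rewrite pf_sum_2_eq, s_coef_0 by exact Hx.
    field. apply Hsin, Hx. }
  set (k := (2 * v)%nat).
  assert (Hsecond : Gamma_nat k * (INR k * INR (S k) / sin x ^ S (S k) - INR k ^ 2 / sin x ^ k)
    = sumR (seq 0 v) (fun n => 4 ^ n * s_coef v n * pf_gamma_sum (S (S (k - 2 * n))) x)).
  { apply (is_derive2_unique_open 0 PI
      (fun y => Gamma_nat k * / sin y ^ k)
      (fun y => sumR (seq 0 v) (fun n => 4 ^ n * s_coef v n * pf_gamma_sum (k - 2 * n) y))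
      (fun y => Gamma_nat k * (- INR k * cos y / sin y ^ S k))
      (fun y => sumR (seq 0 v) (fun n => 4 ^ n * s_coef v n * - pf_gamma_sum (S (k - 2 * n)) y)) x);
      [exact Hx | intros y Hy; apply IH; [lia | exact Hy] | | | |].
    - intros y Hy. apply is_derive_scal, is_derive_inv_sin_pow, Hsin, Hy.
    - intros y Hy. apply is_derive_sumR. intros n Hn. apply in_seq in Hn.
      apply is_derive_scal, is_derive_pf_gamma_sum; [unfold k; lia | exact Hy].
    - apply is_derive_scal, is_derive_cos_div_sin_pow, Hsin, Hx.
    - apply is_derive_sumR. intros n Hn. apply in_seq in Hn.
      replace (4 ^ n * s_coef v n * pf_gamma_sum (S (S (k - 2 * n))) x)
        with (4 ^ n * s_coef v n * - - pf_gamma_sum (S (S (k - 2 * n))) x) by ring.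
      apply is_derive_scal, (@is_derive_opp R_AbsRing R_NormedModule), is_derive_pf_gamma_sum;
        [unfold k; lia | exact Hx]. }
  rewrite (s_coef_sum_step v (fun j => pf_gamma_sum j x)) by lia.
  rewrite <- (IH ltac:(lia) x Hx).
  rewrite (sumR_ext_in _ _ (fun n => 4 ^ n * s_coef v n * pf_gamma_sum (S (S (k - 2 * n))) x))
    by (intros n Hn; apply in_seq in Hn; do 2 f_equal; unfold k; lia).
  rewrite <- Hsecond. fold k.
  replace (2 * S v)%nat with (S (S k)) by (unfold k; lia).
  rewrite (Gamma_nat_S (S k)), (Gamma_nat_S k) by (unfold k; lia).
  replace (INR k) with (2 * INR v) by (unfold k; rewrite mult_INR; reflexivity).
  pose proof (Hsin x Hx). assert (sin x ^ k <> 0) by (apply pow_nonzero; assumption).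
  rewrite S_INR. cbn [pow]. field. auto.
Qed.

(** * Sums over the nodes k pi / (2m) *)

Lemma zeta_is_series p : (2 <= p)%nat -> is_series (fun n => / INR (S n) ^ p) (zeta p).
Proof.
  intros Hp.
  assert (Hext : forall n, / INR (n + 1) ^ p = / INR (S n) ^ p)
    by (intros n; rewrite Nat.add_1_r; reflexivity).
  assert (Hex : exists l, infinite_sum (fun n => / INR (n + 1) ^ p) l).
  { destruct (ex_series_inv_pow p Hp) as [l Hl]. exists l.
    apply is_series_Reals. apply (is_series_ext _ _ _ (fun n => eq_sym (Hext n)) Hl). }
  apply (is_series_ext _ _ _ Hext), is_series_Reals.
  exact (epsilon_spec (inhabits 0) _ Hex).
Qed.

Lemma is_series_zero : is_series (fun _ => 0) 0.
Proof.
  apply is_series_Reals, is_lim_seq_Reals, (is_lim_seq_ext (fun _ => 0)).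
  - intros n. rewrite sum_cte. ring.
  - apply is_lim_seq_const.
Qed.

Lemma is_series_sumR (l : list nat) (a : nat -> nat -> R) (L : nat -> R) :
  (forall k, In k l -> is_series (a k) (L k)) ->
  is_series (fun j => sumR l (fun k => a k j)) (sumR l L).
Proof.
  induction l as [|k0 l IH]; intros H; simpl; [exact is_series_zero |].
  apply (@is_series_plus R_AbsRing R_NormedModule (a k0) (fun j => sumR l (fun k => a k j))).
  - apply H; left; reflexivity.
  - apply IH. intros k Hk; apply H; right; exact Hk.
Qed.

Lemma node_in_interval m k : (1 <= k)%nat -> (k < 2 * m)%nat ->
  0 < INR k * PI / (2 * INR m) < PI.
Proof.
  intros Hk Hkm. pose proof PI_gt_3.
  assert (1 <= INR k) by (apply (le_INR 1); exact Hk).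
  assert (INR k < 2 * INR m) by (rewrite <- (mult_INR 2); apply lt_INR; exact Hkm).
  split; [apply Rdiv_lt_0_compat; nra |].
  apply Rlt_div_l; nra.
Qed.

Lemma pow_even_inv_scale c y A q : c <> 0 -> A <> 0 -> y ^ 2 = (c * A) ^ 2 ->
  c ^ (2 * q) * / y ^ (2 * q) = / A ^ (2 * q).
Proof.
  intros Hc HA Hy. rewrite !pow_mult, Hy, !Rpow_mult_distr.
  assert ((c ^ 2) ^ q <> 0) by (apply pow_nonzero, pow_nonzero; exact Hc).
  assert ((A ^ 2) ^ q <> 0) by (apply pow_nonzero, pow_nonzero; exact HA).
  field. auto.
Qed.

Lemma pf_term_node q m k j : (1 <= k < m)%nat ->
  (PI / (2 * INR m)) ^ (2 * q) * pf_term (2 * q) (INR k * PI / (2 * INR m)) j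
  = / INR (2 * m * j + k) ^ (2 * q) + / INR (2 * m * S j - k) ^ (2 * q).
Proof.
  intros Hk. pose proof PI_gt_3.
  assert (HM : 0 < INR m) by (apply lt_0_INR; lia).
  assert (Hc : PI / (2 * INR m) <> 0) by (apply Rgt_not_eq, Rdiv_lt_0_compat; lra).
  unfold pf_term. rewrite Rmult_plus_distr_l.
  f_equal; apply pow_even_inv_scale; try (exact Hc || (apply not_0_INR; lia)).
  - rewrite plus_INR, !mult_INR. simpl (INR 2). field. lra.
  - rewrite minus_INR by nia. rewrite !mult_INR, S_INR. simpl (INR 2). field. lra.
Qed.

Lemma is_series_pf_term_node q m k : (1 <= q)%nat -> (1 <= k < m)%nat ->
  is_series (fun j => / INR (2 * m * j + k) ^ (2 * q) + / INR (2 * m * S j - k) ^ (2 * q))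
    ((PI / (2 * INR m)) ^ (2 * q) * pf_sum (2 * q) (INR k * PI / (2 * INR m))).
Proof.
  intros Hq Hk.
  apply (is_series_ext (fun j => (PI / (2 * INR m)) ^ (2 * q) * pf_term (2 * q) (INR k * PI / (2 * INR m)) j)).
  { intros j. apply pf_term_node, Hk. }
  apply (@is_series_scal_l R_AbsRing R_NormedModule), Series_correct, ex_series_pf_term;
    [lia | apply node_in_interval; lia].
Qed.

Lemma sum_block_residues m p j : (1 <= m)%nat ->
  sum_f_R0 (fun r => / INR (S (S (2 * m - 1) * j + r)) ^ p) (2 * m - 1)
  = sumR (seq 1 (m - 1)) (fun k => / INR (2 * m * j + k) ^ p + / INR (2 * m * S j - k) ^ p)
    + (/ INR (2 * m * j + m) ^ p + / INR (2 * m * j + 2 * m) ^ p).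
Proof.
  intros Hm.
  set (g := fun r => / INR (2 * m * j + r) ^ p).
  rewrite sum_f_R0_sumR. replace (S (2 * m - 1)) with (2 * m)%nat by lia.
  rewrite (sumR_ext_in _ _ (fun r => g (S r))) by (intros r _; unfold g; do 3 f_equal; lia).
  rewrite <- (sumR_seq_add 1 0).
  replace (2 * m)%nat with ((m - 1) + (1 + ((m - 1) + 1)))%nat at 1 by lia.
  rewrite !seq_app, !sumR_app.
  replace (1 + 0 + (m - 1))%nat with m by lia.
  replace (m + 1 + (m - 1))%nat with (2 * m)%nat by lia.
  rewrite (sumR_seq_add m 1), (sumR_seq1_reflect (m - 1) (fun k => g (m + k)%nat)), sumR_plus.
  rewrite (sumR_ext_in _ (fun k => g (m + (S (m - 1) - k))%nat) (fun k => / INR (2 * m * S j - k) ^ p))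
    by (intros k Hk; apply in_seq in Hk; unfold g; do 3 f_equal; nia).
  cbn [sumR seq Nat.add]. unfold g. ring.
Qed.

Lemma pf_sum_nodes q m : (1 <= q)%nat -> (1 <= m)%nat ->
  (PI / (2 * INR m)) ^ (2 * q) * sumR (seq 1 (m - 1)) (fun k => pf_sum (2 * q) (INR k * PI / (2 * INR m)))
  = zeta (2 * q) * (1 - / INR m ^ (2 * q)).
Proof.
  intros Hq Hm.
  set (p := (2 * q)%nat).
  assert (Hp : (2 <= p)%nat) by (unfold p; lia).
  set (A := fun j => sumR (seq 1 (m - 1)) (fun k => / INR (2 * m * j + k) ^ p + / INR (2 * m * S j - k) ^ p)).
  set (E := fun j => / INR (2 * m * j + m) ^ p + / INR (2 * m * j + 2 * m) ^ p).
  assert (HA : is_series A (sumR (seq 1 (m - 1)) (fun k => (PI / (2 * INR m)) ^ p * pf_sum p (INR k * PI / (2 * INR m))))).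
  { apply (is_series_sumR _ (fun k j => / INR (2 * m * j + k) ^ p + / INR (2 * m * S j - k) ^ p)).
    intros k Hk. apply in_seq in Hk. apply is_series_pf_term_node; lia. }
  assert (HAE : is_series (fun j => A j + E j) (zeta p)).
  { apply (is_series_ext _ _ _ (fun j => sum_block_residues m p j Hm)).
    apply (is_series_blocks (fun n => / INR (S n) ^ p)), zeta_is_series, Hp. }
  assert (HE : is_series E (/ INR m ^ p * zeta p)).
  { apply (is_series_ext (fun j => sum_f_R0 (fun r => / INR (m * S (S 1 * j + r)) ^ p) 1)).
    { intros j. simpl. unfold E. f_equal; do 3 f_equal; nia. }
    apply (is_series_blocks (fun n => / INR (m * S n) ^ p)).
    apply (is_series_ext (fun n => / INR m ^ p * / INR (S n) ^ p)).
    { intros n. simpl. rewrite mult_INR, Rpow_mult_distr, Rinv_mult. reflexivity. }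
    apply (@is_series_scal_l R_AbsRing R_NormedModule), zeta_is_series, Hp. }
  assert (HA' : is_series A (zeta p - / INR m ^ p * zeta p)).
  { apply (is_series_ext (fun j => (A j + E j) - E j)); [intros j; simpl; ring |].
    exact (@is_series_minus R_AbsRing R_NormedModule _ _ _ _ HAE HE). }
  rewrite <- sumR_scal, <- (is_series_unique _ _ HA), (is_series_unique _ _ HA'). ring.
Qed.

Lemma pf_gamma_sum_nodes q m : (1 <= q)%nat -> (1 <= m)%nat ->
  (PI / (2 * INR m)) ^ (2 * q)
    * sumR (seq 1 (m - 1)) (fun k => pf_gamma_sum (2 * q) (INR k * PI / (2 * INR m)))
  = Gamma_nat (2 * q) * zeta (2 * q) * (1 - / INR m ^ (2 * q)).
Proof.
  intros Hq Hm. unfold pf_gamma_sum. rewrite sumR_scal, <- Rmult_assoc.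
  rewrite (Rmult_comm _ (Gamma_nat _)), Rmult_assoc, pf_sum_nodes by assumption. ring.
Qed.

Lemma GF_sum_sin m v : (1 <= m)%nat ->
  GF_sum m v = (PI / (2 * INR m)) ^ (2 * v)
    * sumR (seq 1 (m - 1)) (fun k => / sin (INR k * PI / (2 * INR m)) ^ (2 * v)).
Proof.
  intros Hm. assert (HM : 0 < INR m) by (apply lt_0_INR; lia).
  unfold GF_sum. f_equal. rewrite sumR_seq1_reflect.
  apply sumR_ext_in. intros k Hk. apply in_seq in Hk.
  replace (S (m - 1)) with m by lia. rewrite minus_INR by lia.
  replace ((INR m - INR k) * PI / (2 * INR m)) with (PI / 2 - INR k * PI / (2 * INR m))
    by (field; lra).
  rewrite cos_shift. reflexivity.
Qed.

Theorem mainTheorem3 (m v : nat) (hm : (1 <= m)%nat) (hv : (1 <= v)%nat) :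
  GF_sum m v =
  / INR (fact (2 * v - 1)) *
  sumR (seq 0 v)
    (fun n => (PI / INR m) ^ (2 * n) * s_coef v n *
              Gamma_nat (2 * v - 2 * n) * zeta (2 * v - 2 * n) *
              (1 - / (INR m) ^ (2 * v - 2 * n))).
Proof.
  assert (HM : 0 < INR m) by (apply lt_0_INR; lia).
  set (h := PI / (2 * INR m)).
  rewrite GF_sum_sin by exact hm. fold h.
  rewrite (sumR_ext_in _ _ (fun k => / Gamma_nat (2 * v) * sumR (seq 0 v)
             (fun n => 4 ^ n * s_coef v n * pf_gamma_sum (2 * v - 2 * n) (INR k * PI / (2 * INR m))))).
  2:{ intros k Hk. apply in_seq in Hk.
      pose proof (node_in_interval m k ltac:(lia) ltac:(lia)) as Hx.
      rewrite <- inv_sin_pow_expansion by assumption.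
      field. split; [apply pow_nonzero, Rgt_not_eq, sin_gt_0; lra | apply INR_fact_neq_0]. }
  rewrite sumR_scal, sumR_swap, <- !sumR_scal. apply sumR_ext_in. intros n Hn. apply in_seq in Hn.
  rewrite sumR_scal.
  replace (2 * v - 2 * n)%nat with (2 * (v - n))%nat by lia.
  assert (Hsplit : h ^ (2 * v) = h ^ (2 * n) * h ^ (2 * (v - n))) by (rewrite <- pow_add; f_equal; lia).
  assert (Hpi : (PI / INR m) ^ (2 * n) = 4 ^ n * h ^ (2 * n))
    by (unfold h; rewrite !pow_mult, <- Rpow_mult_distr; f_equal; field; lra).
  pose proof (pf_gamma_sum_nodes (v - n) m ltac:(lia) hm) as Hnodes. fold h in Hnodes.
  set (Sk := sumR (seq 1 (m - 1)) _) in Hnodes |- *.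
  rewrite Hsplit, Hpi.
  transitivity (/ Gamma_nat (2 * v) * (4 ^ n * h ^ (2 * n) * s_coef v n) * (h ^ (2 * (v - n)) * Sk));
    [ring |].
  rewrite Hnodes. change (Gamma_nat (2 * v)) with (INR (fact (2 * v - 1))). ring.
Qed.
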